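(* Let $a=\{a_1,\dots,a_m\}$ be a set of positive rational numbers different from $1$, and for $n\ge 0$ let $\mathcal{A}'_n(a)$ be the arrangement obtained from $\mathcal{A}_n(a)$ by removing the $n$ coordinate hyperplanes $x_i=0$. Then for every $n\ge 1$, $$\chi_{\mathcal{A}'_n(a)}(t)=\chi_{\mathcal{A}_n(a)}(t)+n\,\chi_{\mathcal{A}_{n-1}(a)}(t).$$
   Context: For a set $a=\{a_1,\dots,a_m\}$ of positive rational numbers different from $1$ and $n\ge 1$, $\mathcal{A}_n(a)$ denotes the hyperplane arrangement in $\mathbb{R}^n$ consisting of the hyperplanes $x_i=0$ ($1\le i\le n$), $x_i=x_j$ ($1\le i<j\le n$), and $x_i=a_rx_j$ ($1\le i\neq j\le n$, $1\le r\le m$); $\mathcal{A}_0(a)$ is the empty arrangement in $\mathbb{R}^0$, with characteristic polynomial $1$. For a finite arrangement $\mathcal{A}$ of affine hyperplanes in $\mathbb{R}^n$, the characteristic polynomial is $\chi_{\mathcal{A}}(t)=\sum_{\mathcal{B}}(-1)^{\#\mathcal{B}}t^{n-\operatorname{rank}(\mathcal{B})}$, the sum over subsets $\mathcal{B}\subseteq\mathcal{A}$ whose hyperplanes have nonempty common intersection, where $\operatorname{rank}(\mathcal{B})$ is the dimension of the span of the normal vectors of the hyperplanes in $\mathcal{B}$. *)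

From HB Require Import structures.
From mathcomp Require Import all_boot all_order all_algebra.
From Stdlib Require Import ClassicalEpsilon.
Set Implicit Arguments. Unset Strict Implicit. Unset Printing Implicit Defensive.
Import Order.TTheory GRing.Theory Num.Theory.
Local Open Scope ring_scope.

(* An affine hyperplane in Q^n: the pair (v, c) represents {x | sum_k x_k v_k = c}. *)
Definition hyp (n : nat) : Type := ('rV[rat]_n * rat)%type.

(* Canonical representative of a hyperplane: scale so that the first
   nonzero coordinate of the normal vector is 1.  Two pairs (v,c), (w,d)
   with v, w nonzero define the same hyperplane iff they have the same
   normal form. *)
Definition hnormalize n (H : hyp n) : hyp n :=
  match [pick k | H.1 0 k != 0] with
  | Some k => ((H.1 0 k)^-1 *: H.1, (H.1 0 k)^-1 * H.2)
  | None => H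
  end.

(* An arrangement is the *set* of hyperplanes given by a list of equations:
   normalize and remove duplicates. *)
Definition arr n (s : seq (hyp n)) : seq (hyp n) := undup (map (@hnormalize n) s).

Definition hyp0 n : hyp n := (0, 0).

Definition inter_nonempty n (A : seq (hyp n)) (S : {set 'I_(size A)}) : bool :=
  if excluded_middle_informative
       (exists x : 'rV[rat]_n, forall i : 'I_(size A), i \in S ->
          \sum_(k < n) x 0 k * (nth (hyp0 n) A i).1 0 k = (nth (hyp0 n) A i).2)
  then true else false.

Definition sub_rank n (A : seq (hyp n)) (S : {set 'I_(size A)}) : nat :=
  \rank (\matrix_(i < size A) (if i \in S then (nth (hyp0 n) A i).1 else 0)).

Definition chi_arr n (A : seq (hyp n)) : {poly int} :=
  \sum_(S : {set 'I_(size A)} | inter_nonempty S)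
     (-1) ^+ #|S| *: 'X^(n - sub_rank S).

Definition evec n (i : 'I_n) : 'rV[rat]_n := \row_(k < n) (if k == i then 1 else 0).

Definition coord_hyps n : seq (hyp n) := [seq (evec i, 0) | i : 'I_n].

Definition other_hyps n (a : seq rat) : seq (hyp n) :=
  [seq (evec ij.1 - evec ij.2, 0) | ij : 'I_n * 'I_n <- [seq ij : 'I_n * 'I_n <- [seq (i, j) | i <- enum 'I_n, j <- enum 'I_n] | (ij.1 < ij.2)%N]] ++
  [seq (evec ijr.1.1 - ijr.2 *: evec ijr.1.2, 0)
     | ijr <- [seq (ij, r) | ij : 'I_n * 'I_n <- [seq ij : 'I_n * 'I_n <- [seq (i, j) | i <- enum 'I_n, j <- enum 'I_n] | ij.1 != ij.2], r <- a]].

Definition A_arr n (a : seq rat) : seq (hyp n) := arr (coord_hyps n ++ other_hyps n a).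

Definition A'_arr n (a : seq rat) : seq (hyp n) :=
  [seq H <- A_arr n a | H \notin arr (coord_hyps n)].

From HB Require Import structures.
From mathcomp Require Import all_boot all_order all_algebra.
From mathcomp Require Import ring zify.
From Stdlib Require Import ClassicalEpsilon.
Set Implicit Arguments. Unset Strict Implicit. Unset Printing Implicit Defensive.
Import Order.TTheory GRing.Theory Num.Theory.
Local Open Scope ring_scope.

(* All hyperplanes pass through the origin, so the characteristic polynomial
   is the alternating sum over subfamilies S of t^(n - rank S).  Removing the
   coordinate hyperplanes x_0 = 0, ..., x_(n-1) = 0 one at a time, the
   deletion-restriction identity gives
     chi(A without x_0..x_k) = chi(A without x_0..x_(k-1)) + chi(restriction to x_k = 0),
   and every such restriction is a copy of A_(n-1)(a): the hyperplanes x_i = x_k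
   (i < k, already stripped of x_i = 0) restrict to the coordinate hyperplanes,
   while x_i = x_j and x_i = a_r x_j restrict to their analogues in one
   dimension less or to coordinate hyperplanes (here a_r != 0 is used). *)

Fixpoint subseqs (T : Type) (s : seq T) : seq (seq T) :=
  if s is x :: s' then [seq x :: t | t <- subseqs s'] ++ subseqs s' else [:: [::]].

Section AlternatingSum.
Variables (R : comPzRingType) (U : eqType).
Implicit Types (G : seq U -> R) (s : seq U).

Definition alt_sum G s : R := \sum_(t <- subseqs s) (-1) ^+ size t * G t.

Definition mem_invariant G := forall t t', t =i t' -> G t = G t'.

Lemma alt_sum_nil G : alt_sum G [::] = G [::].
Proof. by rewrite /alt_sum /= big_cons big_nil expr0 mul1r addr0. Qed.

Lemma alt_sum_cons G x s :
  alt_sum G (x :: s) = alt_sum G s - alt_sum (fun t => G (x :: t)) s.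
Proof.
rewrite /alt_sum /= big_cat big_map /= addrC -sumrN; congr (_ + _).
by apply: eq_bigr => t _; rewrite exprS mulN1r mulNr.
Qed.

Lemma eq_alt_sum G G' s : G =1 G' -> alt_sum G s = alt_sum G' s.
Proof. by move=> eG; apply: eq_bigr => t _; rewrite eG. Qed.

Lemma mem_invariant_cons G x : mem_invariant G -> mem_invariant (fun t => G (x :: t)).
Proof. by move=> iG t t' e; apply: iG => y; rewrite !inE e. Qed.

Lemma alt_sum_rem G x s : mem_invariant G -> x \in s ->
  alt_sum G s = alt_sum G (rem x s) - alt_sum (fun t => G (x :: t)) (rem x s).
Proof.
elim: s G => [//|y s IH] G iG; rewrite inE /= eq_sym.
have [-> _|nxy /= xs] := eqVneq y x; first by rewrite alt_sum_cons.
rewrite !alt_sum_cons (IH G iG xs) (IH _ (mem_invariant_cons y iG) xs).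
rewrite (@eq_alt_sum (fun t => G (x :: y :: t)) (fun t => G (y :: x :: t))); first ring.
by move=> t; apply: iG => z; rewrite !inE orbCA.
Qed.

Lemma perm_alt_sum G s s' : mem_invariant G -> perm_eq s s' ->
  alt_sum G s = alt_sum G s'.
Proof.
elim: s' s G => [|x s' IH] s G iG pe; first by move/perm_nilP: pe => ->.
have xs : x \in s by rewrite (perm_mem pe) inE eqxx.
have pe' : perm_eq (rem x s) s'.
  by rewrite -(perm_cons x) (perm_trans _ pe) // perm_sym perm_to_rem.
by rewrite (alt_sum_rem iG xs) alt_sum_cons !(IH _ _ _ pe') //; apply: mem_invariant_cons.
Qed.

End AlternatingSum.

(* Repeated elements cancel in pairs, so only the set of values [g x] matters. *)
Lemma alt_sum_map (R : comPzRingType) (U W : eqType) (g : U -> W) (G : seq W -> R) s :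
  mem_invariant G -> alt_sum (fun t => G (map g t)) s = alt_sum G (undup (map g s)).
Proof.
elim: s G => [|x s IH] G iG; first by rewrite /= !alt_sum_nil.
rewrite alt_sum_cons /= IH // (IH (fun u => G (g x :: u))); last exact: mem_invariant_cons.
case: ifP => gxs; last by rewrite alt_sum_cons.
rewrite [X in _ - X](alt_sum_rem (x := g x) (mem_invariant_cons _ iG)) ?mem_undup //.
rewrite (@eq_alt_sum _ _ (fun t => G (g x :: g x :: t)) (fun t => G (g x :: t))) ?subrr ?subr0 //.
by move=> t; apply: iG => z; rewrite !inE orbA orbb.
Qed.

Lemma big_setS_lift (V : nmodType) m (F : {set 'I_m.+1} -> V) :
  \sum_(S : {set 'I_m.+1}) F S =
  \sum_(S : {set 'I_m}) (F (lift ord0 @: S) + F (ord0 |: lift ord0 @: S)).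
Proof.
have l0 (S : {set 'I_m}) : ord0 \notin lift ord0 @: S.
  by apply/imsetP => -[j _ /eqP]; rewrite eq_liftF.
have liftK (S : {set 'I_m}) : lift ord0 @^-1: (lift ord0 @: S) = S.
  by apply/setP => i; rewrite inE mem_imset //; apply: lift_inj.
rewrite big_split /= [LHS](bigID (fun S : {set _} => ord0 \in S)) /= addrC; congr (_ + _).
  rewrite (reindex_onto (fun S : {set 'I_m} => lift ord0 @: S)
                       (fun S : {set 'I_m.+1} => lift ord0 @^-1: S)).
    by apply: eq_bigl => S; rewrite l0 liftK eqxx.
  move=> S S0; apply/setP => i; case: (unliftP ord0 i) => [j ->|->].
    by rewrite mem_imset ?inE //; apply: lift_inj.
  by rewrite (negbTE (l0 _)) (negbTE S0).
rewrite (reindex_onto (fun S : {set 'I_m} => ord0 |: lift ord0 @: S)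
                     (fun S : {set 'I_m.+1} => lift ord0 @^-1: S)).
  apply: eq_bigl => S; rewrite setU11 /=; apply/eqP/setP => i.
  by rewrite !inE lift_eqF mem_imset //; apply: lift_inj.
move=> S S0; apply/setP => i; rewrite inE; case: (unliftP ord0 i) => [j ->|->].
  by rewrite in_set1 lift_eqF mem_imset ?inE //; apply: lift_inj.
by rewrite in_set1 eqxx S0.
Qed.

Lemma big_subset_alt_sum (R : pzRingType) n (T : Type) (x0 : T)
    (f : T -> 'rV[rat]_n) (F : 'M[rat]_n -> R) s :
  \sum_(S : {set 'I_(size s)}) (-1) ^+ #|S| * F (\sum_(i in S) <<f (nth x0 s i)>>)%MS =
  \sum_(t <- subseqs s) (-1) ^+ size t * F (\sum_(y <- t) <<f y>>)%MS.
Proof.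
elim: s F => [|x s IH] F /=.
  rewrite (big_pred1 set0) ?big_cons ?big_nil ?cards0 ?big_set0 ?addr0 //.
  by move=> S; symmetry; apply/eqP/setP => -[].
have l0 (S : {set 'I_(size s)}) : ord0 \notin lift ord0 @: S.
  by apply/imsetP => -[j _ /eqP]; rewrite eq_liftF.
have lift_inj_in (S : {set 'I_(size s)}) : {in S &, injective (lift ord0)}.
  by move=> i j _ _; apply: lift_inj.
rewrite big_setS_lift big_cat big_map /= addrC big_split /=; congr (_ + _).
  by rewrite -IH; apply: eq_bigr => S _; rewrite card_imset ?big_imset //; apply: lift_inj.
under [RHS]eq_bigr => t _ do rewrite big_cons exprS mulN1r mulNr.
rewrite sumrN -(IH (fun M => F (<<f x>> + M)%MS)) -sumrN; apply: eq_bigr => S _.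
rewrite cardsU1 l0 card_imset ?big_setU1 ?big_imset //=; last exact: lift_inj.
by rewrite add1n exprS mulN1r !mulNr.
Qed.

Definition normal_span n (t : seq (hyp n)) : 'M[rat]_n := (\sum_(H <- t) <<H.1>>)%MS.

Definition Xcorank n (t : seq (hyp n)) : {poly int} := 'X^(n - \rank (normal_span t)).

Lemma eqmx_sum_rows m n (M : 'M[rat]_(m, n)) : (M :=: \sum_i <<row i M>>)%MS.
Proof.
apply/eqmxP/andP; split.
  by apply/row_subP => i; apply: (sumsmx_sup i) => //; rewrite genmxE.
by apply/sumsmx_subP => i _; rewrite genmxE row_sub.
Qed.

(* Every subfamily of a central arrangement meets at the origin. *)
Lemma chi_central n (s : seq (hyp n)) : {in s, forall H, H.2 = 0} ->
  chi_arr s = alt_sum (@Xcorank n) s.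
Proof.
move=> c0; rewrite /chi_arr /alt_sum.
rewrite -(big_subset_alt_sum (hyp0 n) (fun H => H.1) (fun M => 'X^(n - \rank M))).
rewrite (eq_bigl xpredT); last first.
  move=> S; rewrite /inter_nonempty; case: excluded_middle_informative => // [[]].
  exists 0 => i _; rewrite big1 ?c0 ?mem_nth // => k _.
  by rewrite mxE mul0r.
apply: eq_bigr => S _; rewrite -mul_polyC rmorph_sign /sub_rank eqmx_sum_rows.
rewrite (bigID (fun i => i \in S)) /= [X in (_ + X)%MS]big1 ?addsmx0_id.
  by congr (_ * 'X^(n - \rank _)); apply: eq_bigr => i iS; rewrite rowK iS.
by move=> i /negbTE iS; rewrite rowK iS genmx0.
Qed.

Lemma normal_span_sub n (t : seq (hyp n)) (M : 'M[rat]_n) :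
  (normal_span t <= M)%MS = all (fun H : hyp n => <<H.1>> <= M)%MS t.
Proof.
elim: t => [|H t IH]; first by rewrite /normal_span big_nil sub0mx.
by rewrite /normal_span big_cons addsmx_sub -/(normal_span t) IH.
Qed.

Lemma mem_normal_span n (t : seq (hyp n)) H : H \in t -> (<<H.1>> <= normal_span t)%MS.
Proof.
by move=> Ht; move: (normal_span_sub t (normal_span t)); rewrite submx_refl => /esym/allP; apply.
Qed.

Lemma mem_invariant_Xcorank n : mem_invariant (@Xcorank n).
Proof.
move=> t t' e; suff E : (normal_span t :=: normal_span t')%MS by rewrite /Xcorank E.
apply/eqmxP/andP; split; rewrite normal_span_sub; apply/allP => H Ht;
  by apply: mem_normal_span; rewrite ?e // -e.
Qed.

Lemma perm_chi_central n (s s' : seq (hyp n)) : {in s, forall H, H.2 = 0} ->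
  uniq s -> uniq s' -> s =i s' -> chi_arr s = chi_arr s'.
Proof.
move=> c0 us us' ss'; have c0' : {in s', forall H, H.2 = 0}.
  by move=> H; rewrite -ss'; apply: c0.
rewrite !chi_central //; apply: perm_alt_sum; first exact: mem_invariant_Xcorank.
exact: uniq_perm.
Qed.

Section Normalize.
Variable n : nat.
Implicit Types v w : 'rV[rat]_n.

Lemma hnormalize_central v : exists2 c, c != 0 & hnormalize (v, 0) = (c *: v, 0).
Proof.
rewrite /hnormalize /=; case: pickP => [k nz | _].
  by exists (v 0 k)^-1; rewrite ?invr_eq0 // mulr0.
by exists 1; rewrite ?oner_eq0 // scale1r.
Qed.

Lemma hnormalize_eqmx v : ((hnormalize (v, 0)).1 :=: v)%MS.
Proof. by case: (hnormalize_central v) => c nz ->; apply: eqmx_scale. Qed.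

Lemma hnormalize_snd v : (hnormalize (v, 0)).2 = 0.
Proof. by case: (hnormalize_central v) => c nz ->. Qed.

Lemma hnormalizeZ c v : c != 0 -> hnormalize (c *: v, 0) = hnormalize (v, 0).
Proof.
move=> nz; rewrite /hnormalize /=.
have e : (fun i => (c *: v) 0 i != 0) =1 (fun i => v 0 i != 0).
  by move=> i; rewrite mxE mulf_eq0 negb_or nz.
rewrite (eq_pick e); case: pickP => [i nzi|z] /=.
  by congr pair; rewrite ?mulr0 // mxE scalerA invfM mulrAC mulVf ?mul1r.
suff -> : v = 0 by rewrite scaler0.
by apply/rowP => j; rewrite mxE; apply/eqP; move: (z j) => /negbFE.
Qed.

Lemma hnormalizeN v : hnormalize (- v, 0) = hnormalize (v, 0).
Proof. by rewrite -scaleN1r hnormalizeZ // oppr_eq0 oner_eq0. Qed.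

Lemma hnormalize_inj v w : hnormalize (v, 0) = hnormalize (w, 0) ->
  exists2 c, c != 0 & v = c *: w.
Proof.
case: (hnormalize_central v) => c1 nz1 ->; case: (hnormalize_central w) => c2 nz2 -> [] e.
exists (c1^-1 * c2); first by rewrite mulf_neq0 ?invr_eq0.
by rewrite -scalerA -e scalerA mulVf // scale1r.
Qed.

End Normalize.

Lemma evec_neq0 n (i : 'I_n) : evec i != 0.
Proof. by apply/eqP => /rowP /(_ i); rewrite !mxE eqxx => /eqP; rewrite oner_eq0. Qed.

Definition coord_hyp n (i : 'I_n) : hyp n := hnormalize (evec i, 0).

Lemma coord_hyp_inj n : injective (@coord_hyp n).
Proof.
move=> i j /hnormalize_inj [c _ /rowP /(_ i)]; rewrite !mxE eqxx.
by have [//|_] := eqVneq i j; rewrite mulr0 => /eqP; rewrite oner_eq0.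
Qed.

Section RestrictionToCoordinateHyperplane.
Variables (n : nat) (k : 'I_n.+1).

(* Coordinates of {x | x_k = 0} in Q^n: drop the k-th coordinate. *)
Definition restr_mx : 'M[rat]_(n.+1, n) := \matrix_(i, j) ((i == lift k j)%:R).

Lemma restr_mxE (v : 'rV[rat]_n.+1) p : (v *m restr_mx) 0 p = v 0 (lift k p).
Proof.
rewrite mxE (bigD1 (lift k p)) //= mxE eqxx mulr1 big1 ?addr0 // => i /negbTE ne.
by rewrite mxE ne mulr0.
Qed.

Lemma evec_lift_restr p : evec (lift k p) *m restr_mx = evec p.
Proof. by apply/rowP => q; rewrite restr_mxE !mxE (inj_eq lift_inj). Qed.

Lemma evec_restr : evec k *m restr_mx = 0.
Proof. by apply/rowP => q; rewrite restr_mxE !mxE lift_eqF. Qed.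

Lemma restr_mx_decomp (v : 'rV[rat]_n.+1) :
  v = (v *m restr_mx) *m restr_mx^T + v 0 k *: evec k.
Proof.
apply/rowP => j; rewrite !mxE; under eq_bigr => i _ do rewrite restr_mxE !mxE.
case: (unliftP k j) => [p ->|->].
  rewrite (bigD1 p) //= eqxx mulr1 lift_eqF mulr0 addr0 big1 ?addr0 // => i ne.
  by rewrite (inj_eq lift_inj) eq_sym (negbTE ne) mulr0.
by rewrite big1 ?eqxx ?mulr1 ?add0r // => i _; rewrite eq_liftF mulr0.
Qed.

Lemma kermx_restr : (kermx restr_mx :=: evec k)%MS.
Proof.
apply/eqmxP/andP; split; last by apply/sub_kermxP; apply: evec_restr.
apply/row_subP => i; set u := row i _.
have uD0 : u *m restr_mx = 0 by rewrite /u -row_mul mulmx_ker row0.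
by rewrite (restr_mx_decomp u) uD0 mul0mx add0r scalemx_sub.
Qed.

Lemma mxrank_adds_evec (X : 'M[rat]_n.+1) :
  \rank (<<evec k>> + X)%MS = (\rank (X *m restr_mx)).+1.
Proof.
rewrite -(mxrank_mul_ker (<<evec k>> + X)%MS restr_mx).
have -> : ((<<evec k>> + X)%MS *m restr_mx :=: X *m restr_mx)%MS.
  apply/eqmxP/andP; split; last by rewrite addsmxMr addsmxSr.
  by rewrite addsmxMr addsmx_sub submx_refl (eqmxMr _ (genmxE _)) evec_restr sub0mx.
have -> : ((<<evec k>> + X) :&: kermx restr_mx :=: evec k)%MS.
  apply: eqmx_trans _ kermx_restr; apply/capmx_idPr.
  by rewrite kermx_restr (submx_trans _ (addsmxSl _ _)) ?genmxE.
by rewrite rank_rV evec_neq0 addn1.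
Qed.

Definition restr_hyp (H : hyp n.+1) : hyp n := hnormalize (H.1 *m restr_mx, 0).

Lemma restr_hyp_normalize (w : 'rV[rat]_n.+1) :
  restr_hyp (hnormalize (w, 0)) = hnormalize (w *m restr_mx, 0).
Proof.
by case: (hnormalize_central w) => c nz ->; rewrite /restr_hyp /= -scalemxAl hnormalizeZ.
Qed.

Lemma normal_span_restr (t : seq (hyp n.+1)) :
  (normal_span t *m restr_mx :=: normal_span (map restr_hyp t))%MS.
Proof.
elim: t => [|H t IH]; first by rewrite /normal_span !big_nil mul0mx; apply: eqmx0.
rewrite /normal_span /= !big_cons; apply: eqmx_trans (addsmxMr _ _ _) _.
apply: adds_eqmx => //; apply: eqmx_trans (eqmxMr _ (genmxE _)) _.
by apply: eqmx_sym; apply: eqmx_trans (genmxE _) _; apply: hnormalize_eqmx.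
Qed.

Lemma Xcorank_cons_coord (t : seq (hyp n.+1)) :
  Xcorank (coord_hyp k :: t) = Xcorank (map restr_hyp t).
Proof.
rewrite /Xcorank /normal_span big_cons (eq_genmx (hnormalize_eqmx _)).
by rewrite mxrank_adds_evec -/(normal_span t) (normal_span_restr t) subSS.
Qed.

(* [undup] merges hyperplanes that become equal on {x_k = 0}. *)
Lemma chi_deletion_restriction (s : seq (hyp n.+1)) :
  {in s, forall H, H.2 = 0} -> coord_hyp k \in s ->
  chi_arr s =
  chi_arr (rem (coord_hyp k) s) - chi_arr (undup (map restr_hyp (rem (coord_hyp k) s))).
Proof.
move=> c0 Hs; have c0' : {in rem (coord_hyp k) s, forall H, H.2 = 0}.
  by move=> H /mem_rem; apply: c0.
have c0r : {in undup (map restr_hyp (rem (coord_hyp k) s)), forall H, H.2 = 0}.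
  by move=> H; rewrite mem_undup => /mapP [? _ ->]; apply: hnormalize_snd.
rewrite !chi_central // (alt_sum_rem (@mem_invariant_Xcorank _) Hs).
by rewrite (eq_alt_sum _ Xcorank_cons_coord) alt_sum_map //; apply: mem_invariant_Xcorank.
Qed.

End RestrictionToCoordinateHyperplane.

Definition A_equations n (a : seq rat) : seq (hyp n) := coord_hyps n ++ other_hyps n a.

Section Equations.
Variables (n : nat) (a : seq rat).

Lemma A_equationsP x : x \in A_equations n a ->
  [\/ exists i : 'I_n, x = (evec i, 0),
      exists i j : 'I_n, (i < j)%N /\ x = (evec i - evec j, 0) |
      exists (i j : 'I_n) r, [/\ i != j, r \in a & x = (evec i - r *: evec j, 0)]].
Proof.
rewrite !mem_cat => /orP [/mapP [i _ ->]|/orP [/mapP [ij]|/mapP [ijr]]].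
- by constructor 1; exists i.
- by rewrite mem_filter => /andP [lt _] ->; constructor 2; exists ij.1, ij.2.
move=> /allpairsP [[ij r] /= [ijP ra ->]]; move: ijP; rewrite mem_filter => /andP [ne _].
by constructor 3; exists ij.1, ij.2, r.
Qed.

Lemma mem_pairs_enum (i j : 'I_n) :
  (i, j) \in [seq (i, j) | i <- enum 'I_n, j <- enum 'I_n].
Proof. by apply: allpairs_f; rewrite mem_enum. Qed.

Lemma mem_A_equations_coord i : (evec i, 0) \in A_equations n a.
Proof. by rewrite mem_cat map_f ?mem_enum. Qed.

Lemma mem_A_equations_diff (i j : 'I_n) : (i < j)%N ->
  (evec i - evec j, 0) \in A_equations n a.
Proof.
move=> lt; rewrite !mem_cat; apply/orP; right; apply/orP; left.
by apply/mapP; exists (i, j); rewrite ?mem_filter ?lt ?mem_pairs_enum.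
Qed.

Lemma mem_A_equations_ratio (i j : 'I_n) r : i != j -> r \in a ->
  (evec i - r *: evec j, 0) \in A_equations n a.
Proof.
move=> ne ra; rewrite !mem_cat; apply/orP; right; apply/orP; right.
apply/mapP; exists ((i, j), r) => //.
by apply: (allpairs_f (fun ij r => (ij, r))); rewrite ?mem_filter ?ne ?mem_pairs_enum.
Qed.

Lemma A_equations_central x : x \in A_equations n a -> x.2 = 0.
Proof. by case/A_equationsP => [[i ->]|[i [j [_ ->]]]|[i [j [r [_ _ ->]]]]]. Qed.

Lemma A_arrP H : H \in A_arr n a ->
  exists2 x, x \in A_equations n a & H = hnormalize (x.1, 0).
Proof.
rewrite mem_undup => /mapP [x xA ->]; exists x => //.
by rewrite -(A_equations_central xA); case: x xA.
Qed.

Lemma mem_A_arr x : x \in A_equations n a -> hnormalize x \in A_arr n a.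
Proof. by move=> xA; rewrite mem_undup map_f. Qed.

Lemma A_arr_central H : H \in A_arr n a -> H.2 = 0.
Proof. by case/A_arrP => x _ ->; apply: hnormalize_snd. Qed.

End Equations.

Lemma ltn_lift n (h : 'I_n) (i j : 'I_n.-1) : (lift h i < lift h j)%N = (i < j)%N.
Proof. by rewrite /= /bump; case: leqP; case: leqP => /= *; apply/idP/idP; lia. Qed.

Section DeletingCoordinateHyperplanes.
Variables (n : nat) (a : seq rat).
Hypothesis a_neq0 : {in a, forall r, r != 0}.

Definition deleted m (H : hyp n.+1) := [exists i : 'I_n.+1, (i < m)%N && (H == coord_hyp i)].

Definition A_del m := [seq H <- A_arr n.+1 a | ~~ deleted m H].

Lemma deletedS (k : 'I_n.+1) H : deleted k.+1 H = deleted k H || (H == coord_hyp k).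
Proof.
apply/existsP/orP => [[i /andP [+ /eqP ->]]|[/existsP [i /andP [lt e]]|/eqP ->]].
- rewrite ltnS leq_eqVlt => /orP [/eqP/val_inj ->|lt]; first by right.
  by left; apply/existsP; exists i; rewrite lt eqxx.
- by exists i; rewrite ltnS (ltnW lt) e.
- by exists k; rewrite ltnSn eqxx.
Qed.

Lemma not_deleted_evecB m (x y : 'I_n.+1) c : x != y -> c != 0 ->
  ~~ deleted m (hnormalize (evec x - c *: evec y, 0)).
Proof.
move=> xy c0; apply/existsP => -[i /andP [_ /eqP /hnormalize_inj [d _ /rowP e]]].
move: (e x) (e y); rewrite !mxE !eqxx [y == x]eq_sym (negbTE xy) mulr0 subr0 sub0r mulr1.
case: (eqVneq x i) => [<- _|_]; last by rewrite mulr0 => /eqP; rewrite oner_eq0.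
by rewrite eq_sym (negbTE xy) mulr0 => /eqP; rewrite oppr_eq0 (negbTE c0).
Qed.

Lemma A_del0 : A_del 0 = A_arr n.+1 a.
Proof.
by rewrite -[RHS]filter_predT; apply: eq_filter => H; apply/negP => /existsP [].
Qed.

Lemma A_del_all : A_del n.+1 = A'_arr n.+1 a.
Proof.
apply: eq_filter => H; congr negb; rewrite mem_undup.
apply/existsP/mapP => [[i /andP [_ /eqP ->]]|[x /mapP [i _ ->] ->]].
  by exists (evec i, 0); rewrite ?map_f ?mem_enum.
by exists i; rewrite ltn_ord eqxx.
Qed.

Lemma A_del_uniq m : uniq (A_del m).
Proof. by rewrite filter_uniq ?undup_uniq. Qed.

Lemma A_del_central m : {in A_del m, forall H, H.2 = 0}.
Proof. by move=> H; rewrite mem_filter => /andP [_ /A_arr_central]. Qed.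

Lemma A_delS (k : 'I_n.+1) : A_del k.+1 = rem (coord_hyp k) (A_del k).
Proof.
rewrite rem_filter ?A_del_uniq // -filter_predI; apply: eq_filter => H /=.
by rewrite deletedS negb_or andbC.
Qed.

Lemma coord_hyp_A_del (k : 'I_n.+1) : coord_hyp k \in A_del k.
Proof.
rewrite mem_filter mem_A_arr ?mem_A_equations_coord // andbT.
by apply/existsP => -[i /andP [lt /eqP /coord_hyp_inj e]]; rewrite e ltnn in lt.
Qed.

Lemma restr_A_del (k : 'I_n.+1) H : H \in A_del k.+1 -> restr_hyp k H \in A_arr n a.
Proof.
rewrite mem_filter => /andP [+ /A_arrP [x xA eH]]; rewrite eH restr_hyp_normalize.
have coordA p : hnormalize (evec p, 0) \in A_arr n a by apply/mem_A_arr/mem_A_equations_coord.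
case/A_equationsP: xA => [[i ->]|[i [j [lt ->]]]|[i [j [r [ne ra ->]]]]] /= nd;
  rewrite ?mulmxBl -?scalemxAl.
- case: (unliftP k i) => [p ->|ei]; first by rewrite evec_lift_restr.
  by move: nd; rewrite ei deletedS eqxx orbT.
- case: (unliftP k i) => [p ei|ei]; case: (unliftP k j) => [q ej|ej];
    rewrite ?ei ?ej ?evec_lift_restr ?evec_restr ?subr0 ?sub0r ?hnormalizeN //.
  + by apply/mem_A_arr/mem_A_equations_diff; rewrite -(ltn_lift k) -ei -ej.
  + by move: lt; rewrite ei ej ltnn.
- case: (unliftP k i) => [p ei|ei]; case: (unliftP k j) => [q ej|ej];
    rewrite ?ei ?ej ?evec_lift_restr ?evec_restr ?scaler0 ?subr0 ?sub0r ?hnormalizeN //.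
  + apply/mem_A_arr/mem_A_equations_ratio => //.
    by move: ne; rewrite ei ej (inj_eq lift_inj).
  + by rewrite hnormalizeZ ?a_neq0.
  + by move: ne; rewrite ei ej eqxx.
Qed.

Lemma A_arr_restr (k : 'I_n.+1) J : J \in A_arr n a -> J \in map (restr_hyp k) (A_del k.+1).
Proof.
have from_evecB (x y : 'I_n.+1) c : (evec x - c *: evec y, 0) \in A_equations n.+1 a ->
    x != y -> c != 0 -> hnormalize ((evec x - c *: evec y) *m restr_mx k, 0) \in
    map (restr_hyp k) (A_del k.+1).
  move=> xA xy c0; rewrite -restr_hyp_normalize map_f //.
  by rewrite mem_filter mem_A_arr ?not_deleted_evecB.
case/A_arrP => x /A_equationsP [[p ->]|[p [q [lt ->]]]|[p [q [r [ne ra ->]]]]] -> /=.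
- case: (ltngtP (lift k p) k) => [lt|gt|/val_inj/eqP]; last by rewrite lift_eqF.
  + have := from_evecB (lift k p) k 1; rewrite !scale1r mulmxBl evec_lift_restr evec_restr subr0.
    by apply; rewrite ?mem_A_equations_diff ?lift_eqF ?oner_eq0.
  + have := from_evecB k (lift k p) 1; rewrite !scale1r mulmxBl evec_lift_restr evec_restr.
    by rewrite sub0r hnormalizeN; apply; rewrite ?mem_A_equations_diff 1?eq_sym ?lift_eqF ?oner_eq0.
- have := from_evecB (lift k p) (lift k q) 1; rewrite !scale1r mulmxBl !evec_lift_restr.
  apply; rewrite ?mem_A_equations_diff ?ltn_lift ?oner_eq0 //.
  by rewrite (inj_eq lift_inj) neq_ltn lt.
- have := from_evecB (lift k p) (lift k q) r; rewrite mulmxBl -scalemxAl !evec_lift_restr.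
  by apply; rewrite ?mem_A_equations_ratio ?(inj_eq lift_inj) ?a_neq0.
Qed.

Lemma chi_A_delS (k : 'I_n.+1) :
  chi_arr (A_del k.+1) = chi_arr (A_del k) + chi_arr (A_arr n a).
Proof.
rewrite (chi_deletion_restriction (@A_del_central k) (coord_hyp_A_del k)) -A_delS.
suff -> : chi_arr (undup (map (restr_hyp k) (A_del k.+1))) = chi_arr (A_arr n a).
  by rewrite subrK.
apply: perm_chi_central; try exact: undup_uniq.
  by move=> J; rewrite mem_undup => /mapP [H _ ->]; apply: hnormalize_snd.
move=> J; rewrite mem_undup; apply/mapP/idP => [[H HA ->]|/A_arr_restr/mapP //].
exact: restr_A_del.
Qed.

Lemma chi_A_del m : (m <= n.+1)%N ->
  chi_arr (A_del m) = chi_arr (A_arr n.+1 a) + m%:R * chi_arr (A_arr n a).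
Proof.
elim: m => [|m IH] lt; first by rewrite A_del0 mul0r addr0.
by rewrite (chi_A_delS (Ordinal lt)) IH 1?ltnW // mulrSr; ring.
Qed.

End DeletingCoordinateHyperplanes.

Theorem mainTheorem3 (a : seq rat) (n : nat)
  (ha_uniq : uniq a) (ha_pos : all (fun r => 0 < r) a) (ha_ne1 : all (fun r => r != 1) a)
  (hn : (1 <= n)%N) :
  chi_arr (A'_arr n a) = chi_arr (A_arr n a) + n%:R * chi_arr (A_arr n.-1 a).
Proof.
case: n hn => // n _; have a_neq0 : {in a, forall r, r != 0}.
  by move=> r /(allP ha_pos) /= /gt_eqF ->.
by rewrite -A_del_all chi_A_del.
Qed.
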